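(* Let $(G,w)$ be a weighted trigraph, let $C$ be a clique-cutset of $G$, and let $(A,B,C)$ be a cut-partition of $G$. Set $G_A=G[A\cup C]$, $G_B=G[B\cup C]$, and for every $C'\subseteq C$ set $\alpha_{A\cup C'}=\alpha(\mathrm{Red}[G_A,w;A\cup C'])+\mathrm{Ext}[G_A,w;A\cup C']$. Define $w_B:D(G_B)\to\mathbb N$ by $w_B(c)=\alpha_{A\cup\{c\}}-\alpha_A$ for $c\in C$, and $w_B(p)=w(p)$ for all $p\in D(G_B)\setminus C$. Then $w_B$ is a weight function for $G_B$ (in particular each $w_B(c)\ge 0$), and $\alpha(G,w)=\alpha_A+\alpha(G_B,w_B)$.
   Context: A trigraph $G$ consists of a finite vertex set $V(G)$ and an adjacency function $\theta_G:\binom{V(G)}{2}\to\{-1,0,1\}$; for distinct $u,v$ write $uv$ for $\{u,v\}$. The pair $uv$ is strongly adjacent if $\theta_G(uv)=1$, semi-adjacent if $\theta_G(uv)=0$, strongly anti-adjacent if $\theta_G(uv)=-1$; $u,v$ are anti-adjacent if $\theta_G(uv)\le 0$. A stable set is a set of pairwise anti-adjacent vertices; a strong clique is a set of pairwise strongly adjacent vertices. For $X\subseteq V(G)$, $G[X]$ is the trigraph on $X$ with the restricted adjacency function, and $G\setminus X=G[V(G)\setminus X]$. $G$ is connected if the graph on $V(G)$ whose edges are the pairs $uv$ with $\theta_G(uv)\ge 0$ is connected. A clique-cutset is a (possibly empty) strong clique $C$ such that $G\setminus C$ is disconnected. A cut-partition of $G$ is a partition $(A,B,C)$ of $V(G)$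 with $A,B$ non-empty ($C$ possibly empty) such that every vertex of $A$ is strongly anti-adjacent to every vertex of $B$. $\mathbb N$ denotes the non-negative integers. For a trigraph $G$ let $D(G)=V(G)\cup\{(u,v):u,v\in V(G),u\neq v\}\cup\binom{V(G)}{2}$. A weight function for $G$ is a map $w:D(G)\to\mathbb N$ such that for all distinct $u,v$: if $uv$ is not semi-adjacent then $w(u,v)=w(v,u)=w(uv)=0$, and $w(u,v)\le w(uv)$. A weighted trigraph is a pair $(G,w)$ with $w$ a weight function for $G$; for $X\subseteq V(G)$, $(G[X],w)$ denotes $(G[X],w|_{D(G[X])})$. The weight of $S\subseteq V(G)$ is $\llbracket S\rrbracket_{(G,w)}=\sum_{u\in S}w(u)+\sum_{u\in S}\sum_{v\in V(G)\setminus S}w(u,v)+\sum_{uv\in\binom{V(G)\setminus S}{2}}w(uv)$, and $\alpha(G,w)=\max\{\llbracket S\rrbracket_{(G,w)}: S \text{ a stable set of } G\}$. For $R\subseteq V(G)$, the reduction $\mathrm{Red}[G,w;R]$ is the weighted trigraph $(G[R],w')$ where $w'(u)=\max\{w(u)-\sum_{v\in V(G)\setminus R}(w(uv)-w(u,v)),0\}$ for $u\in R$, and $w'(u,v)=w(u,v)$, $w'(uv)=w(uv)$ for distinct $u,v\in R$. The exterior weight is $\mathrm{Ext}[G,w;R]=\sum_{uv\in\binom{V(G)\setminus R}{2}}w(uv)+\sum_{u\in R}\sum_{v\in V(G)\setminus R}w(uv)$. *)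

From HB Require Import structures.
From mathcomp Require Import all_boot all_order all_algebra.
Set Implicit Arguments. Unset Strict Implicit. Unset Printing Implicit Defensive.
Import Order.TTheory GRing.Theory Num.Theory.

(* A trigraph on a finite ambient type T is given by its vertex set
   V : {set T} and an adjacency function theta on unordered pairs,
   represented as 2-element sets [set u; v].  G[X] is (X, theta). *)

Section Trigraphs.
Variable T : finType.

Definition is_trigraph (V : {set T}) (theta : {set T} -> int) : Prop :=
  forall u v, u \in V -> v \in V -> u != v ->
    theta [set u; v] \in [:: (-1)%R; 0%R; 1%R].

Definition strongly_adjacent (theta : {set T} -> int) (u v : T) : Prop :=
  theta [set u; v] = 1%R.
Definition anti_adjacent (theta : {set T} -> int) (u v : T) : Prop :=
  (theta [set u; v] <= 0)%R.
Definition strongly_anti_adjacent (theta : {set T} -> int) (u v : T) : Prop :=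
  theta [set u; v] = (-1)%R.

(* stable set: pairwise anti-adjacent (boolean, so it can filter a \max) *)
Definition stable (theta : {set T} -> int) (S : {set T}) : bool :=
  [forall u in S, forall v in S, (u != v) ==> (theta [set u; v] <= 0)%R].

Definition strong_clique (theta : {set T} -> int) (S : {set T}) : Prop :=
  forall u v, u \in S -> v \in S -> u != v -> strongly_adjacent theta u v.

Definition tedge (V : {set T}) (theta : {set T} -> int) : rel T :=
  fun x y => [&& x \in V, y \in V, x != y & (0 <= theta [set x; y])%R].

Definition tconnected (V : {set T}) (theta : {set T} -> int) : Prop :=
  forall u v, u \in V -> v \in V -> connect (tedge V theta) u v.

Definition clique_cutset (V : {set T}) (theta : {set T} -> int) (C : {set T}) : Prop :=
  C \subset V /\ strong_clique theta C /\ ~ tconnected (V :\: C) theta.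

Definition cut_partition (V : {set T}) (theta : {set T} -> int) (A B C : {set T}) : Prop :=
  [/\ A :|: B :|: C = V, [disjoint A & B], [disjoint A & C] & [disjoint B & C]] /\
  [/\ A != set0, B != set0 &
      forall a b, a \in A -> b \in B -> strongly_anti_adjacent theta a b].

(* Weights: vertex weights wv, arc weights wa (u,v), pair weights we {u,v}.
   Only the values on D(G) are relevant. *)
Record wfun := WFun { wv : T -> nat; wa : T -> T -> nat; we : {set T} -> nat }.

Definition is_weight (V : {set T}) (theta : {set T} -> int) (w : wfun) : Prop :=
  forall u v, u \in V -> v \in V -> u != v ->
    (theta [set u; v] != 0%R -> [/\ wa w u v = 0, wa w v u = 0 & we w [set u; v] = 0])
    /\ wa w u v <= we w [set u; v].

Definition pairsum (w : wfun) (X : {set T}) : nat :=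
  \sum_(e : {set T} | (e \subset X) && (#|e| == 2)) we w e.

Definition weight (V : {set T}) (w : wfun) (S : {set T}) : nat :=
  \sum_(u in S) wv w u + \sum_(u in S) \sum_(v in V :\: S) wa w u v
  + pairsum w (V :\: S).

Definition alpha (V : {set T}) (theta : {set T} -> int) (w : wfun) : nat :=
  \max_(S : {set T} | (S \subset V) && stable theta S) weight V w S.

(* Red[G,w;R]: the weighted trigraph (G[R], w'); vertex set R, same theta. *)
Definition Red_w (V : {set T}) (w : wfun) (R : {set T}) : wfun :=
  WFun (fun u => wv w u - \sum_(v in V :\: R) (we w [set u; v] - wa w u v))
       (wa w) (we w).

Definition Ext (V : {set T}) (w : wfun) (R : {set T}) : nat :=
  pairsum w (V :\: R) + \sum_(u in R) \sum_(v in V :\: R) we w [set u; v].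

End Trigraphs.

From HB Require Import structures.
From mathcomp Require Import all_boot all_order all_algebra.
From mathcomp Require Import zify.
Set Implicit Arguments. Unset Strict Implicit. Unset Printing Implicit Defensive.

(* A stable set meets the clique C in at most one vertex, and no weight lies
   between A and B or inside C; so the weight of a stable set S of G is the
   weight of S :&: G_A in G_A plus that of S :&: G_B in G_B, minus the weight
   of the vertex of S in C, which is counted twice.  For a fixed trace on C the
   G_A-part is optimised by alpha_A (S misses C) or alpha_{A+c} (S meets C in
   c), and w_B charges c with the difference.  That alpha_{A u C'} is such an
   optimum is the identity alpha(Red[W,w;R]) + Ext[W,w;R] = max weight in W of
   a stable subset of R: the vertices whose reduced weight was truncated to 0
   can be dropped without loss. *)

(* Proves a set equality, inclusion or disjointness by case analysis on the
   memberships of one element, using the inclusions and disjointnesses in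
   the context. *)
Ltac set_decide_at x :=
  repeat match goal with
  | H : is_true (_ \subset _) |- _ => move: (subsetP H x); clear H
  | H : is_true [disjoint ?X & _] |- _ =>
      move: (fun h : x \in X => disjointFr H h); clear H
  | H : is_true (x \in _) |- _ => move: H
  | H : is_true (x \notin _) |- _ => move: H
  end;
  rewrite !inE;
  repeat match goal with
  | |- context [x \in ?X] => case: (x \in X)
  | |- context [x == ?y] => case: (x == y)
  end;
  rewrite /=; intros;
  repeat match goal with H : is_true true -> _ |- _ => specialize (H isT) end;
  by [].
Ltac set_decide := let x := fresh "x" in apply/setP => x; set_decide_at x.
Ltac subset_decide := let x := fresh "x" in apply/subsetP => x; set_decide_at x.
Ltac disjoint_decide := rewrite -setI_eq0; apply/eqP; set_decide.

Section Weights.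
Variable T : finType.
Implicit Types (X Y R S W : {set T}) (w : wfun T) (theta : {set T} -> int).

Definition alpha_in W theta w R : nat :=
  \max_(S : {set T} | (S \subset R) && stable theta S) weight W w S.

Lemma alphaE W theta w : alpha W theta w = alpha_in W theta w W.
Proof. by []. Qed.

Definition wa_le_we w X :=
  {in X &, forall u v, u != v -> wa w u v <= we w [set u; v]}.

Definition red_deficit w W R (u : T) : nat :=
  \sum_(v in W :\: R) (we w [set u; v] - wa w u v).

Lemma sum_setU (F : T -> nat) X Y : [disjoint X & Y] ->
  \sum_(i in X :|: Y) F i = \sum_(i in X) F i + \sum_(i in Y) F i.
Proof. by move=> dXY; rewrite -bigU //; apply: eq_bigl => i; rewrite !inE. Qed.

Lemma set2_eqE (x y a b : T) : x != y ->
  ([set x; y] == [set a; b]) = ((x, y) == (a, b)) || ((x, y) == (b, a)).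
Proof.
move=> nxy; apply/idP/idP; last by case/orP=> /eqP[-> ->] //; rewrite setUC.
move/eqP=> E.
have xab : x \in [set a; b] by rewrite -E set21.
have yab : y \in [set a; b] by rewrite -E set22.
move: xab yab nxy; rewrite !inE -!pair_eqE /=.
by case/orP=> /eqP-> /orP[]/eqP->; rewrite ?eqxx //= ?andbT ?orbT.
Qed.

Lemma pairsum_ordered w X :
  \sum_(x in X) \sum_(y in X :\ x) we w [set x; y] = 2 * pairsum w X.
Proof.
rewrite /pairsum pair_big_dep /=.
rewrite (partition_big (fun p : T * T => [set p.1; p.2])
   (fun e : {set T} => (e \subset X) && (#|e| == 2))) /=; last first.
  move=> [x y] /=; rewrite !inE => /andP[xX /andP[nyx yX]].
  rewrite cards2 (eq_sym x y) nyx andbT; apply/subsetP=> z /set2P [] -> //.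
rewrite big_distrr /=; apply: eq_bigr => e /andP[eX /cards2P[a [b [nab E]]]]; subst e.
rewrite (eq_bigr (fun _ => we w [set a; b])); last by move=> p /andP[_ /eqP->].
rewrite sum_nat_const; congr (_ * _).
have aX : a \in X by apply: (subsetP eX); exact: set21.
have bX : b \in X by apply: (subsetP eX); exact: set22.
transitivity #|[set (a, b); (b, a)]|; last by rewrite cards2 xpair_eqE negb_and nab.
apply: eq_card => [[x y]]; rewrite [in LHS]unfold_in /= !inE.
apply/idP/idP; first by case/andP=> /andP[xX /andP[nyx yX]]; rewrite set2_eqE 1?eq_sym.
case/orP=> /eqP[-> ->]; rewrite ?set2_eqE ?eqxx ?aX ?bX //= ?orbT ?andbT //;
  by rewrite ?nab // eq_sym nab.
Qed.

Lemma pairsumU w X Y : [disjoint X & Y] ->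
  pairsum w (X :|: Y) = pairsum w X + pairsum w Y
     + \sum_(x in X) \sum_(y in Y) we w [set x; y].
Proof.
move=> dXY.
(* Pairs are easier to split when counted as ordered pairs. *)
suff: 2 * pairsum w (X :|: Y) = 2 * (pairsum w X + pairsum w Y
     + \sum_(x in X) \sum_(y in Y) we w [set x; y]) by lia.
rewrite !mulnDr -!pairsum_ordered sum_setU //=.
have -> : \sum_(x in X) \sum_(y in (X :|: Y) :\ x) we w [set x; y]
  = \sum_(x in X) \sum_(y in X :\ x) we w [set x; y]
    + \sum_(x in X) \sum_(y in Y) we w [set x; y].
  rewrite -big_split; apply: eq_bigr => x xX /=.
  rewrite setDUl (setDidPl (_ : [disjoint Y & [set x]])); last first.
    by rewrite disjoint_sym disjoints1 (disjointFr dXY xX).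
  by rewrite sum_setU //; apply: disjointWl dXY; apply: subsetDl.
have -> : \sum_(x in Y) \sum_(y in (X :|: Y) :\ x) we w [set x; y]
  = \sum_(x in Y) \sum_(y in Y :\ x) we w [set x; y]
    + \sum_(x in X) \sum_(y in Y) we w [set x; y].
  rewrite [X in _ = _ + X]exchange_big /= -big_split.
  apply: eq_bigr => x xY /=.
  rewrite setDUl (setDidPl (_ : [disjoint X & [set x]])); last first.
    by rewrite disjoint_sym disjoints1 (disjointFl dXY xY).
  rewrite sum_setU /=; last by apply: disjointWr dXY; apply: subsetDl.
  by rewrite addnC; congr (_ + _); apply: eq_bigr => y _; rewrite setUC.
lia.
Qed.

Lemma pairsum_eq0 w X :
  {in X &, forall u v, u != v -> we w [set u; v] = 0} -> pairsum w X = 0.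
Proof.
move=> we0; apply: big1 => e /andP[eX /cards2P[a [b [nab E]]]]; subst e.
by apply: we0 => //; apply: (subsetP eX); rewrite !inE eqxx ?orbT.
Qed.

Lemma weight_change_wv w1 w2 X S : wa w1 = wa w2 -> we w1 = we w2 ->
  weight X w1 S + \sum_(u in S) wv w2 u = weight X w2 S + \sum_(u in S) wv w1 u.
Proof. by move=> ea ee; rewrite /weight /pairsum ea ee; lia. Qed.

(* Every arc weight lost by dropping Z from S is compensated by the pair
   weight gained. *)
Lemma weight_drop_wv0 w X S (Z : {set T}) :
  Z \subset S -> S \subset X -> wa_le_we w X -> {in Z, forall u, wv w u = 0} ->
  weight X w S <= weight X w (S :\: Z).
Proof.
move=> ZS SX waX Z0.
have ES : S = (S :\: Z) :|: Z by set_decide.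
have dS : [disjoint S :\: Z & Z] by disjoint_decide.
have EX : X :\: (S :\: Z) = (X :\: S) :|: Z by set_decide.
have dX : [disjoint X :\: S & Z] by disjoint_decide.
rewrite /weight {1 2}ES !sum_setU // EX pairsumU //.
rewrite [\sum_(u in Z) wv w u]big1 ?addn0 //.
have arcs_kept : \sum_(u in S :\: Z) \sum_(v in X :\: S) wa w u v <=
                 \sum_(u in S :\: Z) \sum_(v in X :\: S :|: Z) wa w u v.
  by apply: leq_sum => u _; rewrite sum_setU //; apply: leq_addr.
have arcs_lost : \sum_(u in Z) \sum_(v in X :\: S) wa w u v <=
                 \sum_(x in X :\: S) \sum_(y in Z) we w [set x; y].
  rewrite exchange_big /=; apply: leq_sum => v; rewrite inE => /andP[vS vX].
  apply: leq_sum => u uZ; have uS := subsetP ZS u uZ.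
  rewrite setUC; apply: waX => //; first exact: (subsetP SX).
  by apply: contraNneq vS => <-.
lia.
Qed.

Lemma weight_Red w W R S : R \subset W -> S \subset R -> wa_le_we w W ->
  weight R (Red_w W w R) S + Ext W w R + \sum_(u in S) wv w u =
  weight W w S + \sum_(u in S) ((wv w u - red_deficit w W R u) + red_deficit w W R u).
Proof.
move=> RW SR waW.
have EW : W :\: S = (R :\: S) :|: (W :\: R) by set_decide.
have dW : [disjoint R :\: S & W :\: R] by disjoint_decide.
rewrite /weight /Ext /= EW pairsumU // [\sum_(u in R) _](big_setID S) /= (setIidPr SR).
rewrite -[pairsum (Red_w W w R) _]/(pairsum w _).
rewrite -[\sum_(u in S) (wv w u - _)]/(\sum_(u in S) (wv w u - red_deficit w W R u)).
have -> : \sum_(u in S) \sum_(v in R :\: S :|: W :\: R) wa w u v =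
   \sum_(u in S) \sum_(v in R :\: S) wa w u v + \sum_(u in S) \sum_(v in W :\: R) wa w u v.
  by rewrite -big_split; apply: eq_bigr => u _; rewrite sum_setU.
have -> : \sum_(u in S) \sum_(v in W :\: R) we w [set u; v] =
   \sum_(u in S) red_deficit w W R u + \sum_(u in S) \sum_(v in W :\: R) wa w u v.
  rewrite -big_split; apply: eq_bigr => u uS; rewrite -big_split.
  apply: eq_bigr => v; rewrite !inE => /andP[vR vW] /=; rewrite subnK //.
  apply: waW => //; first by apply: (subsetP RW); apply: (subsetP SR).
  by apply: contraNneq vR => <-; apply: (subsetP SR).
rewrite big_split /=; lia.
Qed.

Lemma stable_subset theta S S' : S' \subset S -> stable theta S -> stable theta S'.
Proof.
move=> S'S /forallP stS; apply/forallP=> u; apply/implyP=> uS'.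
have /implyP/(_ (subsetP S'S u uS'))/forallP stu := stS u.
apply/forallP=> v; apply/implyP=> vS'.
exact: (implyP (stu v) (subsetP S'S v vS')).
Qed.

Lemma stable_set0 theta : stable theta set0.
Proof. by apply/forallP=> u; rewrite inE. Qed.

Lemma stableP theta S :
  reflect {in S &, forall u v, u != v -> (theta [set u; v] <= 0)%R} (stable theta S).
Proof.
apply: (iffP forallP) => [stS u v uS vS|stS u].
  exact: implyP (implyP (forallP (implyP (stS u) uS) v) vS).
by apply/implyP=> uS; apply/forallP=> v; apply/implyP=> vS; apply/implyP; apply: stS.
Qed.

Lemma stableU theta S1 S2 : stable theta S1 -> stable theta S2 ->
  {in S1 :\: S2 & S2 :\: S1, forall u v, (theta [set u; v] <= 0)%R} ->
  stable theta (S1 :|: S2).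
Proof.
move=> /stableP st1 /stableP st2 cross; apply/stableP => u v.
rewrite !inE => uS vS nuv.
case u1: (u \in S1); case u2: (u \in S2); case v1: (v \in S1); case v2: (v \in S2);
  move: uS vS; rewrite ?u1 ?u2 ?v1 ?v2 //= => _ _; try by [apply: st1 | apply: st2].
- by apply: cross; rewrite inE ?u1 ?u2 ?v1 ?v2.
- by rewrite setUC; apply: cross; rewrite inE ?u1 ?u2 ?v1 ?v2.
Qed.

Lemma stable_meet_clique theta S C : stable theta S -> strong_clique theta C ->
  S :&: C = set0 \/ exists2 c, c \in C & S :&: C = [set c].
Proof.
move=> /stableP stS cl; case: (set_0Vmem (S :&: C)) => [->|[c]]; first by left.
rewrite inE => /andP[cS cC]; right; exists c => //.
apply/setP=> x; rewrite !inE; apply/idP/idP; last by move/eqP->; rewrite cS cC.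
case/andP=> xS xC; apply/negPn/negP=> nxc.
by move: (stS x c xS cS nxc); rewrite (cl x c xC cC nxc).
Qed.

Lemma leq_alpha_in W theta w R S : S \subset R -> stable theta S ->
  weight W w S <= alpha_in W theta w R.
Proof.
move=> SR stS.
by apply: (leq_bigmax_cond (P := fun S : {set T} => (S \subset R) && stable theta S)); rewrite SR.
Qed.

Lemma alpha_in_attained W theta w R :
  exists2 S : {set T}, (S \subset R) && stable theta S & alpha_in W theta w R = weight W w S.
Proof.
have [|S] := eq_bigmax_cond (weight W w) (A := fun S : {set T} => (S \subset R) && stable theta S).
  by apply/card_gt0P; exists set0; rewrite unfold_in /= sub0set stable_set0.
by rewrite unfold_in => SR maxE; exists S; rewrite // -maxE.
Qed.

Lemma alpha_inS W theta w R R' : R \subset R' ->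
  alpha_in W theta w R <= alpha_in W theta w R'.
Proof.
move=> RR'; apply/bigmax_leqP => S /andP[SR stS].
by apply: leq_alpha_in => //; apply: subset_trans RR'.
Qed.

Lemma alpha_Red W theta w R : R \subset W -> wa_le_we w W ->
  alpha R theta (Red_w W w R) + Ext W w R = alpha_in W theta w R.
Proof.
move=> RW waW; apply/eqP; rewrite eqn_leq; apply/andP; split; last first.
  apply/bigmax_leqP=> S /andP[SR stS].
  have := weight_Red RW SR waW.
  have : \sum_(u in S) wv w u <=
         \sum_(u in S) ((wv w u - red_deficit w W R u) + red_deficit w W R u).
    by apply: leq_sum => u _; lia.
  have := leq_alpha_in R (Red_w W w R) SR stS; rewrite -alphaE; lia.
rewrite alphaE.
have [S0 /andP[S0R stS0] ->] := alpha_in_attained R theta (Red_w W w R) R.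
pose Z := [set u in S0 | wv w u < red_deficit w W R u].
have S1R : S0 :\: Z \subset R by apply: subset_trans S0R; apply: subsetDl.
have drop_Z : weight R (Red_w W w R) S0 <= weight R (Red_w W w R) (S0 :\: Z).
  apply: weight_drop_wv0 => //.
  - by apply/subsetP=> u; rewrite inE => /andP[].
  - by move=> u v uR vR; apply: waW; apply: (subsetP RW).
  - by move=> u; rewrite inE => /andP[_ lt] /=; apply/eqP; rewrite subn_eq0 ltnW.
have := weight_Red RW S1R waW.
have -> : \sum_(u in S0 :\: Z) ((wv w u - red_deficit w W R u) + red_deficit w W R u)
          = \sum_(u in S0 :\: Z) wv w u.
  apply: eq_bigr => u; rewrite !inE => /andP[+ uS]; rewrite uS /= -leqNgt.
  by move=> le; rewrite subnK.
have := leq_alpha_in W w S1R (stable_subset (subsetDl _ _) stS0).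
lia.
Qed.

Lemma weight_split w (A B C : {set T}) S :
  [disjoint A & B] -> [disjoint A & C] -> [disjoint B & C] ->
  S \subset A :|: B :|: C ->
  {in A & B, forall a b, [/\ wa w a b = 0, wa w b a = 0 & we w [set a; b] = 0]} ->
  {in C &, forall c c', c != c' -> wa w c c' = 0 /\ we w [set c; c'] = 0} ->
  weight (A :|: B :|: C) w S + \sum_(u in S :&: C) wv w u =
  weight (A :|: C) w (S :&: (A :|: C)) + weight (B :|: C) w (S :&: (B :|: C)).
Proof.
move=> dAB dAC dBC SV zAB zC.
pose arc (P Q : {set T}) := \sum_(u in P) \sum_(v in Q) wa w u v.
pose cross (P Q : {set T}) := \sum_(u in P) \sum_(v in Q) we w [set u; v].
have arcUl (P P' Q : {set T}) : [disjoint P & P'] -> arc (P :|: P') Q = arc P Q + arc P' Q.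
  by move=> d; rewrite /arc sum_setU.
have arcUr (P Q Q' : {set T}) : [disjoint Q & Q'] -> arc P (Q :|: Q') = arc P Q + arc P Q'.
  by move=> d; rewrite /arc -big_split; apply: eq_bigr => u _; rewrite sum_setU.
have crossUl (P P' Q : {set T}) : [disjoint P & P'] -> cross (P :|: P') Q = cross P Q + cross P' Q.
  by move=> d; rewrite /cross sum_setU.
have crossC (P Q : {set T}) : cross P Q = cross Q P.
  rewrite /cross exchange_big; apply: eq_bigr => u _; apply: eq_bigr => v _.
  by rewrite setUC.
have ES : S = (S :&: A) :|: (S :&: B) :|: (S :&: C) by set_decide.
have ESA : S :&: (A :|: C) = (S :&: A) :|: (S :&: C) by set_decide.
have ESB : S :&: (B :|: C) = (S :&: B) :|: (S :&: C) by set_decide.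
have EV : (A :|: B :|: C) :\: S = (A :\: S) :|: (C :\: S) :|: (B :\: S) by set_decide.
have EA : (A :|: C) :\: (S :&: (A :|: C)) = (A :\: S) :|: (C :\: S) by set_decide.
have EB : (B :|: C) :\: (S :&: (B :|: C)) = (B :\: S) :|: (C :\: S) by set_decide.
have d1 : [disjoint S :&: A :|: S :&: B & S :&: C] by disjoint_decide.
have d2 : [disjoint S :&: A & S :&: B] by disjoint_decide.
have d3 : [disjoint S :&: A & S :&: C] by disjoint_decide.
have d4 : [disjoint S :&: B & S :&: C] by disjoint_decide.
have d5 : [disjoint A :\: S :|: C :\: S & B :\: S] by disjoint_decide.
have d6 : [disjoint A :\: S & C :\: S] by disjoint_decide.
have d7 : [disjoint B :\: S & C :\: S] by disjoint_decide.
have arcS Q : arc S Q = arc (S :&: A) Q + arc (S :&: B) Q + arc (S :&: C) Q.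
  by rewrite {1}ES !arcUl.
rewrite /weight EV EA EB ESA ESB -!/(arc _ _) arcS.
rewrite {1}ES !sum_setU // !arcUr // !arcUl // !pairsumU // -!/(cross _ _) crossUl //.
have zAB_arc : arc (S :&: A) (B :\: S) = 0.
  by apply: big1 => u /setIP[_ uA]; apply: big1 => v /setDP[vB _]; case: (zAB u v uA vB).
have zBA_arc : arc (S :&: B) (A :\: S) = 0.
  by apply: big1 => u /setIP[_ uB]; apply: big1 => v /setDP[vA _]; case: (zAB v u vA uB).
have zC_arc : arc (S :&: C) (C :\: S) = 0.
  apply: big1 => u /setIP[uS uC]; apply: big1 => v /setDP[vC vS].
  by case: (zC u v uC vC) => //; apply: contraNneq vS => <-.
have zAB_cross : cross (A :\: S) (B :\: S) = 0.
  by apply: big1 => u /setDP[uA _]; apply: big1 => v /setDP[vB _]; case: (zAB u v uA vB).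
have zC_pairs : pairsum w (C :\: S) = 0.
  apply: pairsum_eq0 => u v /setDP[uC _] /setDP[vC _] nuv.
  by case: (zC u v uC vC nuv).
rewrite zAB_arc zBA_arc zC_arc zAB_cross zC_pairs (crossC (C :\: S) (B :\: S)).
lia.
Qed.

Lemma is_weight_subset (V : {set T}) W theta w w' : W \subset V ->
  wa w' = wa w -> we w' = we w -> is_weight V theta w -> is_weight W theta w'.
Proof.
by move=> WV ea ee ww u v uW vW; rewrite ea ee; apply: ww; apply: (subsetP WV).
Qed.

Lemma is_weight_wa_le_we (V : {set T}) theta w : is_weight V theta w -> wa_le_we w V.
Proof. by move=> ww u v uV vV nuv; case: (ww u v uV vV nuv). Qed.

End Weights.

Section CliqueCutset.
Variables (T : finType) (V : {set T}) (theta : {set T} -> int) (w : wfun T).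
Variables (A B C : {set T}).
Implicit Types (S D : {set T}).
Hypothesis w_weight : is_weight V theta w.
Hypothesis C_clique : strong_clique theta C.
Hypothesis ABC_V : A :|: B :|: C = V.
Hypotheses (AB_disj : [disjoint A & B]) (AC_disj : [disjoint A & C]).
Hypothesis BC_disj : [disjoint B & C].
Hypothesis AB_anti : {in A & B, forall a b, strongly_anti_adjacent theta a b}.
Variable aC : {set T} -> nat.
Hypothesis aCE : forall D, D \subset C -> aC D = alpha_in (A :|: C) theta w (A :|: D).

Definition cut_weight : wfun T :=
  WFun (fun v => if v \in C then aC [set v] - aC set0 else wv w v) (wa w) (we w).

Lemma aC_set0_le c : c \in C -> aC set0 <= aC [set c].
Proof.
by move=> cC; rewrite !aCE ?sub0set ?sub1set // setU0; apply/alpha_inS/subsetUl.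
Qed.

Lemma is_weight_cut_weight : is_weight (B :|: C) theta cut_weight.
Proof. by apply: is_weight_subset w_weight => //; rewrite -ABC_V setSU ?subsetUr. Qed.

Lemma cut_weight_split S : S \subset V ->
  weight V w S + \sum_(u in S :&: C) wv cut_weight u =
  weight (A :|: C) w (S :&: (A :|: C)) + weight (B :|: C) cut_weight (S :&: (B :|: C)).
Proof.
move=> SV.
have zero u v : u \in V -> v \in V -> u != v -> theta [set u; v] != 0%R ->
    [/\ wa w u v = 0, wa w v u = 0 & we w [set u; v] = 0].
  by move=> uV vV nuv; apply: (proj1 (w_weight uV vV nuv)).
have inV (X : {set T}) (x : T) : X \subset A :|: B :|: C -> x \in X -> x \in V.
  by rewrite ABC_V => XV; apply: (subsetP XV).
have zAB : {in A & B, forall a b, [/\ wa w a b = 0, wa w b a = 0 & we w [set a; b] = 0]}.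
  move=> a b aA bB; apply: zero; [apply: inV _ _ _ aA | apply: inV _ _ _ bB | |]; try subset_decide.
    by apply: contraTneq bB => <-; rewrite (disjointFr AB_disj aA).
  by rewrite (AB_anti aA bB).
have zC : {in C &, forall c c', c != c' -> wa w c c' = 0 /\ we w [set c; c'] = 0}.
  move=> c c' cC c'C ncc.
  have [] // := zero c c' (inV C c _ cC) (inV C c' _ c'C) ncc; try subset_decide.
  by rewrite (C_clique cC c'C ncc).
have := weight_split AB_disj AC_disj BC_disj _ zAB zC; rewrite ABC_V => /(_ _ SV).
have ESB : S :&: (B :|: C) = (S :&: B) :|: (S :&: C) by set_decide.
have dBC : [disjoint S :&: B & S :&: C] by disjoint_decide.
have := weight_change_wv (B :|: C) (S :&: (B :|: C)) (w1 := cut_weight) (w2 := w) erefl erefl.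
rewrite ESB !sum_setU // -ESB.
have -> : \sum_(u in S :&: B) wv cut_weight u = \sum_(u in S :&: B) wv w u.
  by apply: eq_bigr => u /setIP[_ uB] /=; rewrite (disjointFr BC_disj uB).
lia.
Qed.

(* S1 :|: S2 is a stable set of G, as A and B are strongly anti-adjacent. *)
Lemma glue_le_alpha S1 S2 : S1 \subset A :|: C -> S2 \subset B :|: C ->
  stable theta S1 -> stable theta S2 -> S1 :&: C = S2 :&: C ->
  weight (A :|: C) w S1 + weight (B :|: C) cut_weight S2
    <= alpha V theta w + \sum_(u in S1 :&: C) wv cut_weight u.
Proof.
move=> S1A S2B st1 st2 /setP trace.
have traceE x : (x \in S1) && (x \in C) = (x \in S2) && (x \in C).
  by move: (trace x); rewrite !inE.
have SV : S1 :|: S2 \subset V by rewrite -ABC_V; subset_decide.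
have E1 : (S1 :|: S2) :&: (A :|: C) = S1.
  by apply/setP => x; move: (traceE x); set_decide_at x.
have E2 : (S1 :|: S2) :&: (B :|: C) = S2.
  by apply/setP => x; move: (traceE x); set_decide_at x.
have E3 : (S1 :|: S2) :&: C = S1 :&: C.
  by apply/setP => x; move: (traceE x); set_decide_at x.
have st : stable theta (S1 :|: S2).
  apply: stableU => // u v /setDP[uS1 uS2] /setDP[vS2 vS1].
  have uA : u \in A by move: (traceE u) (subsetP S1A u uS1); set_decide_at u.
  have vB : v \in B by move: (traceE v) (subsetP S2B v vS2); set_decide_at v.
  by rewrite (AB_anti uA vB).
rewrite -E3 -[in X in X + _]E1 -[in X in _ + X]E2 -cut_weight_split // leq_add2r.
exact: leq_alpha_in.
Qed.

Lemma glue_off_C S2 : S2 \subset B :|: C -> stable theta S2 -> S2 :&: C = set0 ->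
  aC set0 + weight (B :|: C) cut_weight S2 <= alpha V theta w.
Proof.
move=> S2B st2 S2C.
have [SA /andP[SAA stA] aCA] := alpha_in_attained (A :|: C) theta w (A :|: set0).
have SAC : SA :&: C = set0.
  by apply/setP => x; move: (subsetP SAA x); set_decide_at x.
have := glue_le_alpha _ S2B stA st2 (etrans SAC (esym S2C)).
rewrite SAC big_set0 addn0 aCE ?sub0set // aCA; apply.
by apply: subset_trans SAA _; subset_decide.
Qed.

Lemma alpha_cut_le : alpha V theta w <= aC set0 + alpha (B :|: C) theta cut_weight.
Proof.
apply/bigmax_leqP => S /andP[SV st].
have := cut_weight_split SV.
have SB : weight (B :|: C) cut_weight (S :&: (B :|: C)) <= alpha (B :|: C) theta cut_weight.
  by apply: leq_alpha_in; rewrite ?subsetIr ?(stable_subset (subsetIl _ _) st).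
have stA := stable_subset (subsetIl S (A :|: C)) st.
case: (stable_meet_clique st C_clique) => [SC | [c cC SC]]; rewrite SC.
- have SA : weight (A :|: C) w (S :&: (A :|: C)) <= aC set0.
    rewrite aCE ?sub0set //; apply: leq_alpha_in stA.
    by apply/subsetP => x; move/setP: SC => /(_ x); set_decide_at x.
  rewrite big_set0; lia.
- have SA : weight (A :|: C) w (S :&: (A :|: C)) <= aC [set c].
    rewrite aCE ?sub1set //; apply: leq_alpha_in stA.
    by apply/subsetP => x; move/setP: SC => /(_ x); set_decide_at x.
  have := aC_set0_le cC; rewrite big_set1 /= cC; lia.
Qed.

Lemma alpha_cut_ge : aC set0 + alpha (B :|: C) theta cut_weight <= alpha V theta w.
Proof.
rewrite [alpha (B :|: C) _ _]alphaE.
have [S /andP[SB st] ->] := alpha_in_attained (B :|: C) theta cut_weight (B :|: C).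
case: (stable_meet_clique st C_clique) => [SC | [c cC SC]]; first exact: glue_off_C.
have [Sc /andP[ScA stc] aCc] := alpha_in_attained (A :|: C) theta w (A :|: [set c]).
have aCc_le := aC_set0_le cC.
case cSc: (c \in Sc).
  have ScC : Sc :&: C = [set c].
    apply/setP => x; rewrite !inE; case: (eqVneq x c) => [->|nxc]; first by rewrite cSc cC.
    by move: (subsetP ScA x); rewrite !inE (negbTE nxc) orbF; set_decide_at x.
  have ScG : Sc \subset A :|: C by apply: subset_trans ScA (setUS A _); rewrite sub1set.
  have := glue_le_alpha ScG SB stc st (etrans ScC (esym SC)).
  by rewrite ScC big_set1 /= cC -aCc -aCE ?sub1set //; lia.
(* Otherwise alpha_{A+c} is attained off c, so w_B(c) = 0 and c can be dropped. *)
have wc0 : wv cut_weight c = 0.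
  apply/eqP; rewrite /= cC subn_eq0 aCE ?sub1set // aCc aCE ?sub0set //.
  apply: leq_alpha_in stc; apply/subsetP => x xSc.
  move: (subsetP ScA x xSc); rewrite !inE orbF => /orP[//|/eqP xc].
  by move: xSc; rewrite xc cSc.
have drop_c : weight (B :|: C) cut_weight S <= weight (B :|: C) cut_weight (S :\: [set c]).
  apply: weight_drop_wv0 => //; last by move=> u /set1P ->.
    by rewrite sub1set; move/setP: SC => /(_ c); rewrite !inE eqxx => /andP[].
  exact/is_weight_wa_le_we/is_weight_cut_weight.
have S'C : (S :\: [set c]) :&: C = set0.
  by apply/setP => x; move/setP: SC => /(_ x); set_decide_at x.
have := glue_off_C (subset_trans (subsetDl _ _) SB) (stable_subset (subsetDl _ _) st) S'C.
lia.
Qed.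

End CliqueCutset.

Theorem lemma3p10 (T : finType) (V : {set T}) (theta : {set T} -> int)
    (w : wfun T) (A B C : {set T}) :
  is_trigraph V theta -> is_weight V theta w ->
  clique_cutset V theta C -> cut_partition V theta A B C ->
  let GA := A :|: C in
  let GB := B :|: C in
  let alphaAC := fun C' : {set T} =>
    alpha (A :|: C') theta (Red_w GA w (A :|: C')) + Ext GA w (A :|: C') in
  let wB := WFun (fun v => if v \in C then alphaAC [set v] - alphaAC set0
                           else wv w v) (wa w) (we w) in
  (forall c, c \in C -> alphaAC set0 <= alphaAC [set c]) /\
  is_weight GB theta wB /\
  alpha V theta w = alphaAC set0 + alpha GB theta wB.
Proof.
move=> _ ww [_ [cl _]] [[ABC_V dAB dAC dBC] [_ _ anti]] GA GB alphaAC wB.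
have alphaACE (C' : {set T}) : C' \subset C -> alphaAC C' = alpha_in GA theta w (A :|: C').
  move=> C'C; have GAV : GA \subset V by rewrite -ABC_V; subset_decide.
  apply: alpha_Red; first by rewrite /GA; subset_decide.
  exact/is_weight_wa_le_we/(is_weight_subset GAV erefl erefl ww).
split; first exact: aC_set0_le alphaACE.
split; first by move=> u v; apply: (is_weight_cut_weight ww ABC_V).
apply/eqP; rewrite eqn_leq.
by rewrite (alpha_cut_le ww cl ABC_V dAB dAC dBC anti alphaACE)
           (alpha_cut_ge ww cl ABC_V dAB dAC dBC anti alphaACE).
Qed.
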